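(* Let $g\in L^1(a,b)$ and $\varepsilon>0$. Then there exists $x_\varepsilon\in\mathbb R$ such that the grid $\mathcal G_\varepsilon=\{x_\alpha:=x_\varepsilon+2\varepsilon\alpha:\ \alpha\in\mathbb Z,\ x_\alpha\in(a+\varepsilon,b-\varepsilon)\}$ contains a subset $\mathcal G'_\varepsilon\subset\mathcal G_\varepsilon$ with $$\int_{\bigcup\{I_\varepsilon(x_\alpha):x_\alpha\in\mathcal G'_\varepsilon\}}|g|\,dt+2\,\#(\mathcal G_\varepsilon\setminus\mathcal G'_\varepsilon)\le\frac1{c_0\varepsilon}\int_a^bf\Big(\varepsilon\fint_{I_\varepsilon(x)\cap(a,b)}|g|\,dt\Big)dx.$$
   Context: $0<a<b<\infty$, $c_0>0$, $f(t)=c_0t$ for $0\le t<1$ and $f(t)=c_0$ for $t\ge1$. $I_\varepsilon(x)=(x-\varepsilon,x+\varepsilon)$, $\fint_Bh=\frac1{|B|}\int_Bh$. *)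

From HB Require Import structures.
From mathcomp Require Import all_boot all_order all_algebra.
From mathcomp Require Import all_classical all_reals all_analysis.
Set Implicit Arguments. Unset Strict Implicit. Unset Printing Implicit Defensive.
Import Order.TTheory GRing.Theory Num.Theory.
Local Open Scope classical_set_scope.
Local Open Scope ring_scope.

Definition fcut {R : realType} (c0 t : R) : R := if t < 1 then c0 * t else c0.

Definition Ieps {R : realType} (eps x : R) : set R := `](x - eps), (x + eps)[.

Definition avg {R : realType} (B : set R) (h : R -> R) : R :=
  (fine (lebesgue_measure B))^-1 * fine (\int[lebesgue_measure]_(t in B) (h t)%:E).

Definition gpt {R : realType} (x0 eps : R) (k : int) : R := x0 + 2 * eps * k%:~R.

Definition grid {R : realType} (a b eps x0 : R) : set int :=
  [set k | a + eps < gpt x0 eps k < b - eps].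

From HB Require Import structures.
From mathcomp Require Import all_boot all_order all_algebra.
From mathcomp Require Import all_classical all_reals all_analysis.
From mathcomp Require Import measurable_realfun ring lra.
Set Implicit Arguments. Unset Strict Implicit. Unset Printing Implicit Defensive.
Import Order.TTheory GRing.Theory Num.Theory.
Import numFieldNormedType.Exports.
Local Open Scope classical_set_scope.
Local Open Scope ring_scope.

(* Let m(x) = \int_{I_eps(x)} |g| be the mass of |g| on the window I_eps(x)
   and F(x) = f(m(x) / 2).  For x in [a + eps, b - eps] the window lies in
   (a, b), so F(x) is exactly the integrand f(eps \fint_{I_eps(x)} |g|) of the
   right-hand side.  Since m is a difference of values of a primitive of
   |g| 1_(a,b), F is continuous and Q = \int F is a C^1 primitive of F.

   1. Averaging over shifts (section averaging_over_shifts): for Q of class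
      C^1 on [c, d] and h > 0, some grid xi + h N with xi in (c, c + h) has
      h * \sum_(xi + h k < d) Q'(xi + h k) <= Q d - Q c.  This follows from the
      mean value theorem applied to sums of shifted copies of Q, whose
      increments telescope to Q d - Q c.  With c = a + eps, d = b - eps,
      h = 2 eps we get a grid with 2 eps \sum_alpha F(x_alpha) <= \int_a^b F.
   2. Selection: keep the grid points with m(x_alpha) < 2.  By subadditivity
      of the integral the kept windows carry at most \sum m(x_alpha), and each
      dropped point costs 2, so the left-hand side is at most
      \sum_alpha min(m(x_alpha), 2) = (2 / c0) \sum_alpha F(x_alpha). *)

Local Notation mu := lebesgue_measure.

Section shifted_sums.
Variable R : realType.
Implicit Types (Q F : R -> R) (h y : R).

Lemma shifted_sum_continuous Q h y n :
  (forall k, (k < n)%N -> {for y + h * k%:R, continuous Q}) ->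
  {for y, continuous (fun z => \sum_(k < n) Q (z + h * k%:R))}.
Proof.
elim: n => [|n IH] Qcont.
  under [X in {for y, continuous X}]funext => z do rewrite big_ord0.
  exact: cvg_cst.
under [X in {for y, continuous X}]funext => z do rewrite big_ord_recr.
apply: cvgD; first by apply: IH => k kn; apply: Qcont; rewrite ltnS ltnW.
apply: (@continuous_comp R R R (fun z => z + h * n%:R) Q y); last exact: Qcont.
by apply: cvgD; [exact: cvg_id|exact: cvg_cst].
Qed.

Lemma shifted_sum_derive Q F h y n :
  (forall k, (k < n)%N -> is_derive (y + h * k%:R) 1 Q (F (y + h * k%:R))) ->
  is_derive y 1 (fun z => \sum_(k < n) Q (z + h * k%:R))
    (\sum_(k < n) F (y + h * k%:R)).
Proof.
move=> Q'F; rewrite -fct_sumE; apply: is_derive_sum => k.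
have := @is_derive1_comp R Q (fun z => z + h * k%:R) y _ 1 (Q'F k (ltn_ord k)).
by rewrite mulr1; apply; exact: is_derive_shift.
Qed.

Lemma shifted_sum_telescope Q y h m :
  \sum_(k < m) Q (y + h + h * k%:R) - \sum_(k < m) Q (y + h * k%:R) =
  Q (y + h * m%:R) - Q y.
Proof.
elim: m => [|m IH]; first by rewrite !big_ord0 mulr0 addr0 !subrr.
rewrite !big_ord_recr /=.
have -> : y + h + h * m%:R = y + h * m.+1%:R by rewrite -addn1 natrD; ring.
by move: IH; set A := \sum_(i < m) _; set B := \sum_(i < m) _; lra.
Qed.

End shifted_sums.

Section averaging_over_shifts.
Variables (R : realType) (Q F : R -> R) (c d h : R).
Hypotheses (h_gt0 : 0 < h)
  (Q_cont : forall t, c <= t <= d -> {for t, continuous Q})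
  (Q'_F : forall t, c < t < d -> is_derive t 1 Q (F t)).

Let h_mulr_nat_le {k n : nat} : (k <= n)%N -> h * k%:R <= h * n%:R.
Proof. by move=> kn; rewrite ler_pM2l// ler_nat. Qed.

Lemma shifted_sum_MVT y0 y1 n : y0 < y1 ->
  (forall k, (k < n)%N -> c <= y0 + h * k%:R /\ y1 + h * k%:R <= d) ->
  exists2 xi, y0 < xi < y1 &
    \sum_(k < n) Q (y1 + h * k%:R) - \sum_(k < n) Q (y0 + h * k%:R) =
    (\sum_(k < n) F (xi + h * k%:R)) * (y1 - y0).
Proof.
move=> y01 inside.
have Q'_sum x : x \in `]y0, y1[ -> is_derive x 1
    (fun z => \sum_(k < n) Q (z + h * k%:R)) (\sum_(k < n) F (x + h * k%:R)).
  rewrite in_itv/= => /andP[x0 x1]; apply: shifted_sum_derive => k kn.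
  by have [? ?] := inside k kn; apply: Q'_F; apply/andP; split; lra.
have Q_sum_cont : {within `[y0, y1],
    continuous (fun z => \sum_(k < n) Q (z + h * k%:R))}.
  apply: continuous_in_subspaceT => x; rewrite inE/= in_itv/= => /andP[x0 x1].
  apply: shifted_sum_continuous => k kn.
  by have [? ?] := inside k kn; apply: Q_cont; apply/andP; split; lra.
have [xi xiin ->] := MVT y01 Q'_sum Q_sum_cont.
by exists xi => //; rewrite in_itv/= in xiin.
Qed.

Lemma shifted_count xi M : xi + h * M%:R - h < d <= xi + h * M%:R ->
  forall k, (k < M)%N = (xi + h * k%:R < d).
Proof.
move=> /andP[last_below first_above] k; apply/idP/idP => [kM|].
  have : h * k.+1%:R <= h * M%:R by exact: h_mulr_nat_le.
  by rewrite -addn1 natrD mulrDr mulr1; lra.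
by apply: contraTT; rewrite -leqNgt -leNgt => /h_mulr_nat_le; lra.
Qed.

Lemma last_step_below : c < d -> exists n : nat, c + h * n%:R < d <= c + h * n.+1%:R.
Proof.
move=> cd; pose P N := d <= c + h * N%:R.
have exP : exists N, P N.
  exists (Num.Def.archi_bound ((d - c) / h)); rewrite /P.
  have /archi_boundP : 0 <= (d - c) / h by rewrite divr_ge0 ?subr_ge0 ?ltW.
  by rewrite ltr_pdivrMr// mulrC; lra.
case: (ex_minnP exP) => -[|n]; rewrite /P ?mulr0 ?addr0 => above minimal.
  lra.
exists n; rewrite above andbT ltNge.
by apply/negP => /minimal; rewrite ltnn.
Qed.

(* Writing d = ys + h n with ys in (c, c + h], the increments of the shifted
   sums of Q over [c, ys] and [ys, c + h] add up to Q d - Q c (telescoping),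
   so one of the two mean values given by shifted_sum_MVT is small enough. *)
Lemma averaging_shift : c < d ->
  exists xi, exists M : nat, [/\ c < xi < c + h,
    forall k, (k < M)%N = (xi + h * k%:R < d) &
    h * \sum_(k < M) F (xi + h * k%:R) <= Q d - Q c].
Proof.
move=> cd; have [n /andP[below above]] := last_step_below cd.
have hSn : h * n.+1%:R = h * n%:R + h by rewrite -addn1 natrD mulrDr mulr1.
have hk_ge0 k : 0 <= h * k%:R by rewrite mulr_ge0// ltW.
pose ys := d - h * n%:R.
have ys_gt : c < ys by rewrite /ys; lra.
have ys_le : ys <= c + h by rewrite /ys; lra.
have inside1 k : (k < n.+1)%N -> c <= c + h * k%:R /\ ys + h * k%:R <= d.
  rewrite ltnS => /h_mulr_nat_le kn.
  by have := hk_ge0 k; rewrite /ys; split; lra.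
have [xi1 /andP[xi1_gt xi1_lt] E1] := shifted_sum_MVT ys_gt inside1.
have [small1|large1] := leP (h * \sum_(k < n.+1) F (xi1 + h * k%:R)) (Q d - Q c).
  exists xi1, n.+1; split => //; first by apply/andP; split; lra.
  by apply: shifted_count; rewrite hSn /ys in xi1_lt *; apply/andP; split; lra.
have ys_lt : ys < c + h.
  rewrite lt_neqAle ys_le andbT; apply/negP => /eqP ysE.
  move: E1 large1; rewrite ysE shifted_sum_telescope hSn.
  have -> : c + (h * n%:R + h) = d by rewrite /ys in ysE; lra.
  by move=> ->; lra.
have inside2 k : (k < n)%N -> c <= ys + h * k%:R /\ c + h + h * k%:R <= d.
  move=> kn; have : h * k.+1%:R <= h * n%:R by exact: h_mulr_nat_le.
  by have := hk_ge0 k; rewrite -addn1 natrD mulrDr mulr1; split; lra.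
have [xi2 /andP[xi2_gt xi2_lt] E2] := shifted_sum_MVT ys_lt inside2.
exists xi2, n; split; first by apply/andP; split; lra.
  by apply: shifted_count; rewrite /ys in xi2_gt; apply/andP; split; lra.
have last1 : \sum_(k < n.+1) Q (ys + h * k%:R) =
    \sum_(k < n) Q (ys + h * k%:R) + Q d by rewrite big_ord_recr /= subrK.
have last2 : \sum_(k < n.+1) Q (c + h * k%:R) =
    \sum_(k < n) Q (c + h * k%:R) + Q (c + h * n%:R) by rewrite big_ord_recr.
have T := shifted_sum_telescope Q c h n.
rewrite last1 last2 in E1.
set A1 := \sum_(k < n.+1) _ in E1 large1; set A2 := \sum_(k < n) F _ in E2 *.
have mean : Q d - Q c = A1 * (ys - c) + A2 * (c + h - ys) by lra.
have w1 : 0 < ys - c by lra.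
have w2 : 0 < c + h - ys by lra.
nra.
Qed.

End averaging_over_shifts.

Section parameterized_integrals.
Variable R : realType.
Implicit Types (f : R -> R) (t u v : R).

Lemma parameterized_integral_continuous_at f x0 x1 t :
  mu.-integrable `[x0, x1] (EFin \o f) -> x0 < t < x1 ->
  {for t, continuous (fun x => parameterized_integral mu x0 x f)}.
Proof.
move=> intf /andP[x0t tx1]; have x01 := lt_trans x0t tx1.
have [+ _ _] := (continuous_within_itvP _ x01).1
  (parameterized_integral_continuous (ltW x01) intf).
by apply; rewrite in_itv/= x0t tx1.
Qed.

Lemma parameterized_integral_increment f x0 u v :
  mu.-integrable `[x0, v] (EFin \o f) -> x0 <= u -> u <= v ->
  ((parameterized_integral mu x0 v f - parameterized_integral mu x0 u f)%:E =
   \int[mu]_(x in `]u, v[) (f x)%:E)%E.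
Proof.
move=> intf x0u uv.
have intuv : mu.-integrable `]u, v] (EFin \o f).
  by apply: integrableS intf => //; apply: subset_itvr; rewrite bnd_simp.
rewrite /parameterized_integral Rintegral_itvB ?bnd_simp//.
rewrite -Rintegral_itv_bndo_bndc; last first.
  by apply: integrableS intuv => //; exact: subset_itvW.
rewrite /Rintegral fineK//; apply: integrable_fin_num => //.
by apply: integrableS intuv => //; exact: subset_itvW.
Qed.

End parameterized_integrals.

Section nonnegative_integrals.
Context d (T : measurableType d) (R : realType) (mu : {measure set T -> \bar R}).
Local Open Scope ereal_scope.

(* Unlike
   ge0_subset_integral this needs no measurability, since both integrals are
   suprema of integrals of simple functions below f \_ A <= f \_ B. *)
Lemma ge0_subset_integral_le (A B : set T) (f : T -> \bar R) :
  (forall x, B x -> 0 <= f x) -> A `<=` B ->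
  \int[mu]_(x in A) f x <= \int[mu]_(x in B) f x.
Proof.
move=> f0 AB; rewrite ge0_integralE; last by move=> x /AB /f0.
rewrite ge0_integralE //; apply: ereal_sup_le => _ [h /= hf <-].
exists h => //= x; apply: (le_trans (hf x)); rewrite /patch.
case: ifPn => xA; last by case: ifPn => // xB; apply: f0; rewrite inE in xB.
by rewrite ifT // inE; apply: AB; rewrite inE in xA.
Qed.

Lemma ge0_integral_setU_le (A U V : set T) (f : T -> \bar R) :
  measurable A -> measurable U -> measurable V -> U `<=` A -> V `<=` A ->
  measurable_fun A f -> (forall x, A x -> 0 <= f x) ->
  \int[mu]_(x in U `|` V) f x <= \int[mu]_(x in U) f x + \int[mu]_(x in V) f x.
Proof.
move=> mA mU mV UA VA mf f0.
have mUVU : measurable ((U `|` V) `\` U) by apply: measurableD => //; exact: measurableU.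
have UVA : U `|` V `<=` A by move=> x [/UA|/VA].
rewrite -(setDUK (@subsetUl _ U V)) ge0_integral_setU//; first last.
- by rewrite disj_set2E setDIK.
- by rewrite setDUK //; move=> x /UVA /f0.
- by rewrite setDUK //; exact: measurable_funS mf.
rewrite leeD2l// ge0_subset_integral//.
- exact: measurable_funS mf.
- by move=> x /VA /f0.
- by move=> x [[//|]].
Qed.

Lemma ge0_integral_bigcup_le (A : set T) (f : T -> \bar R) (J : nat -> set T)
    (p : pred nat) (M : nat) :
  measurable A -> measurable_fun A f -> (forall x, A x -> 0 <= f x) ->
  (forall i, measurable (J i)) -> (forall i, (i < M)%N -> J i `<=` A) ->
  \int[mu]_(x in \bigcup_(i in [set i | (i < M)%N && p i]) J i) f x <=
  \sum_(i < M | p i) \int[mu]_(x in J i) f x.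
Proof.
move=> mA mf f0 mJ; elim: M => [|M IH] JA.
  rewrite big_ord0 (_ : [set i | _] = set0) ?bigcup_set0 ?integral_set0//.
  by apply/seteqP; split => x.
pose last := if p M then J M else set0.
have -> : \bigcup_(i in [set i | (i < M.+1)%N && p i]) J i =
    \bigcup_(i in [set i | (i < M)%N && p i]) J i `|` last.
  apply/seteqP; split => x /=.
    move=> [i /andP[+ pi] Jx]; rewrite ltnS leq_eqVlt => /orP[/eqP iM|iM].
      by right; rewrite /last -iM pi.
    by left; exists i => //=; rewrite iM.
  case=> [[i /andP[iM pi] Jx]|]; first by exists i => //=; rewrite pi ltnW.
  by rewrite /last; case: ifPn => // pM JM; exists M => //=; rewrite pM ltnSn.
have JA' i : (i < M)%N -> J i `<=` A by move=> iM; apply: JA; rewrite ltnW.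
rewrite big_mkcond big_ord_recr -big_mkcond /=.
apply: le_trans (ge0_integral_setU_le _ _ _ _ _ _ f0) _ => //.
- by apply: bigcup_measurable => k _.
- by rewrite /last; case: ifP.
- by move=> x [i /andP[iM _] /(JA' i iM)].
- by rewrite /last; case: ifP => _; [exact: JA|exact: sub0set].
apply: leeD; first exact: IH.
by rewrite /last; case: ifP; rewrite ?integral_set0.
Qed.

End nonnegative_integrals.

Lemma fsbig_Posz_image (V : nmodType) (F : int -> V) (M : nat) (p : pred nat) :
  \sum_(k \in (fun i : nat => i%:Z) @` [set i | (i < M)%N && p i]) F k =
  \sum_(i < M | p i) F i.
Proof.
rewrite fsbig_image; last by move=> x y _ _ [].
rewrite (_ : [set i | _] = [set` [seq i <- index_iota 0 M | p i]]); last first.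
  by apply/seteqP; split => x /=; rewrite mem_filter mem_index_iota andbC.
by rewrite -fsbig_seq ?filter_uniq ?iota_uniq // big_filter big_mkord.
Qed.

Section fcut.
Variables (R : realType) (c0 : R).

Lemma fcutE (t : R) : fcut c0 t = c0 * Num.min t 1.
Proof. by rewrite /fcut /Num.min /Order.min; case: ifP => _; rewrite ?mulr1. Qed.

Lemma fcut_ge0 (t : R) : 0 <= c0 -> 0 <= t -> 0 <= fcut c0 t.
Proof. by move=> c0_ge0 t_ge0; rewrite fcutE mulr_ge0// le_min t_ge0 ler01. Qed.

Lemma fcut_continuous : continuous (fcut c0).
Proof.
have -> : fcut c0 = (fun t => c0 * t) \o (id \min cst 1).
  by apply: funext => t; rewrite fcutE.
move=> t; apply: continuous_comp; last exact: mulrl_continuous.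
apply: (@min_fun_continuous _ R R id (cst 1)); first by move=> ?; exact: cvg_id.
exact: cst_continuous.
Qed.

Lemma min2_fcut (m : R) : 0 < c0 -> Num.min m 2 = 2 / c0 * fcut c0 (m / 2).
Proof.
move=> c0_gt0; rewrite fcutE mulrA divfK ?gt_eqF// minr_pMr//.
by rewrite mulrCA divff// mulr1 mulr1.
Qed.

End fcut.

Lemma gpt_nat (R : realType) (x0 eps : R) (i : nat) :
  gpt x0 eps i = x0 + 2 * eps * i%:R.
Proof. by []. Qed.

Section grid_indices.
Variables (R : realType) (a b eps xi : R) (M : nat).
Hypotheses (eps_gt0 : 0 < eps) (xi_gt : a + eps < xi) (xi_lt : xi < a + eps + 2 * eps)
  (below_M : forall k : nat, (k < M)%N = (xi + 2 * eps * k%:R < b - eps)).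

Lemma grid_indexP (k : int) :
  grid a b eps xi k <-> exists2 i : nat, (i < M)%N & k = i%:Z.
Proof.
have step_ge0 (i : nat) : 0 <= 2 * eps * i%:R by rewrite mulr_ge0 ?ler0n// mulr_ge0// ltW.
split; last first.
  move=> [i iM ->]; rewrite /grid /= gpt_nat -below_M iM andbT.
  by move: xi_gt (step_ge0 i); lra.
rewrite /grid => /andP[]; case: k => i lo hi.
  by exists i => //; rewrite below_M -gpt_nat.
have gpt_neg : gpt xi eps (Negz i) = xi - 2 * eps * i.+1%:R.
  by rewrite /gpt NegzE intrN mulrN.
rewrite gpt_neg -(natr1 i) mulrDr mulr1 in lo.
by move: lo xi_lt (step_ge0 i); lra.
Qed.

Lemma grid_select (P : pred int) :
  grid a b eps xi `&` [set k | P k] = (fun i : nat => i%:Z) @` [set i | (i < M)%N && P i].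
Proof.
apply/seteqP; split => [k [/grid_indexP[i iM ->] Pi]|_ [i /andP[iM Pi] <-]].
  by exists i => //=; rewrite iM.
by split => //; apply/grid_indexP; exists i.
Qed.

End grid_indices.

Section window_mass.
Variables (R : realType) (a b c0 eps : R) (g : R -> R).
Hypotheses (c0_gt0 : 0 < c0) (eps_gt0 : 0 < eps)
  (ig : mu.-integrable `]a, b[ (EFin \o g)).

Local Notation absg := ((fun t => `|g t|) \_ `]a, b[).

Local Notation integrand x := (fcut c0 (eps * avg (Ieps eps x `&` `]a, b[) (fun t => `|g t|))).

Lemma absg_integrable (u v : R) : mu.-integrable `[u, v] (EFin \o absg).
Proof.
rewrite -restrict_EFin; apply/integrable_restrict => //.
by apply: integrableS (integrable_norm ig) => //; exact: measurableI.
Qed.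

(* A primitive of |g| 1_(a, b), based to the left of every window I_eps(x)
   with x >= a. *)
Definition absg_primitive (t : R) : R :=
  parameterized_integral mu (a - eps - 1) t absg.

Definition window_mass (x : R) : R :=
  absg_primitive (x + eps) - absg_primitive (x - eps).

Lemma absg_primitive_continuous (t : R) : a - eps - 1 < t ->
  {for t, continuous absg_primitive}.
Proof.
move=> t_gt; apply: (parameterized_integral_continuous_at (absg_integrable _ (t + 1))).
by rewrite t_gt ltrDl ltr01.
Qed.

Lemma window_mass_integral (x : R) : a + eps <= x -> x <= b - eps ->
  ((window_mass x)%:E = \int[mu]_(t in Ieps eps x) `|g t|%:E)%E.
Proof.
move=> xa xb; have e0 := eps_gt0.
rewrite /window_mass /absg_primitive parameterized_integral_increment; first last.
- by lra.
- by lra.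
- exact: absg_integrable.
apply: eq_integral => t; rewrite inE/= in_itv/= => /andP[? ?].
by rewrite /patch ifT// inE/= in_itv/=; apply/andP; split; lra.
Qed.

Lemma eps_avg_window (x : R) : a + eps <= x -> x <= b - eps ->
  eps * avg (Ieps eps x `&` `]a, b[) (fun t => `|g t|) = window_mass x / 2.
Proof.
move=> xa xb; have e0 := eps_gt0.
have -> : Ieps eps x `&` `]a, b[ = Ieps eps x.
  by apply: setIidl; apply: subset_itvW; lra.
rewrite /avg -window_mass_integral// /Ieps lebesgue_measure_itv/= lte_fin ifT; last lra.
by rewrite -EFinD /=; field; lra.
Qed.

Lemma integrand_ge0 (x : R) : 0 <= integrand x.
Proof.
apply: fcut_ge0; first exact: ltW.
apply: mulr_ge0; first exact: ltW.
apply: mulr_ge0; first by rewrite invr_ge0 fine_ge0.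
by rewrite fine_ge0// integral_ge0// => t _; rewrite lee_fin.
Qed.

Definition truncated_mass (x : R) : R := fcut c0 (window_mass x / 2).

(* F is continuous wherever both window ends lie right of the base point. *)
Lemma truncated_mass_continuous (x : R) : a - 1 < x ->
  {for x, continuous truncated_mass}.
Proof.
move=> x_gt; have e0 := eps_gt0.
apply: continuous_comp; last exact: fcut_continuous.
apply: cvgM; last exact: cvg_cst.
apply: cvgB.
- apply: (@continuous_comp R R R (fun y => y + eps) absg_primitive x).
    by apply: cvgD; [exact: cvg_id|exact: cvg_cst].
  by apply: absg_primitive_continuous; lra.
- apply: (@continuous_comp R R R (fun y => y - eps) absg_primitive x).
    by apply: cvgB; [exact: cvg_id|exact: cvg_cst].
  by apply: absg_primitive_continuous; lra.
Qed.

Lemma truncated_mass_integrable : mu.-integrable `[a, b] (EFin \o truncated_mass).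
Proof.
apply: continuous_compact_integrable; first exact: segment_compact.
apply: continuous_in_subspaceT => x; rewrite inE/= in_itv/= => /andP[xa _].
by apply: truncated_mass_continuous; lra.
Qed.

Definition truncated_mass_primitive (x : R) : R :=
  parameterized_integral mu a x truncated_mass.

Lemma truncated_mass_primitive_continuous (t : R) : a < t < b ->
  {for t, continuous truncated_mass_primitive}.
Proof. exact: parameterized_integral_continuous_at truncated_mass_integrable. Qed.

Lemma truncated_mass_primitive_derive (t : R) : a < t < b ->
  is_derive t 1 truncated_mass_primitive (truncated_mass t).
Proof.
move=> /andP[a_t t_b].
have t_gt : a - 1 < t by lra.
have [Q'_ex Q'E] := continuous_FTC1_closed t_b truncated_mass_integrable a_t
  (truncated_mass_continuous t_gt).
by rewrite -Q'E derive1E; exact: derivableP.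
Qed.

Lemma truncated_mass_primitive_le : a + eps < b - eps ->
  ((truncated_mass_primitive (b - eps) - truncated_mass_primitive (a + eps))%:E <=
   \int[mu]_(x in `]a, b[) (integrand x)%:E)%E.
Proof.
move=> cd; have e0 := eps_gt0.
rewrite parameterized_integral_increment; first last.
- by lra.
- by lra.
- by apply: integrableS truncated_mass_integrable => //; apply: subset_itvl; rewrite bnd_simp; lra.
have -> : (\int[mu]_(x in `](a + eps)%R, (b - eps)%R[) (truncated_mass x)%:E =
    \int[mu]_(x in `](a + eps)%R, (b - eps)%R[) (integrand x)%:E)%E.
  apply: eq_integral => x; rewrite inE/= in_itv/= => /andP[? ?].
  by rewrite /truncated_mass eps_avg_window//; lra.
apply: ge0_subset_integral_le; first by move=> x _; rewrite lee_fin integrand_ge0.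
by apply: subset_itvW; lra.
Qed.

Lemma good_grid_shift : exists xi, exists M : nat,
  [/\ a + eps < xi, xi < a + eps + 2 * eps,
      forall k : nat, (k < M)%N = (xi + 2 * eps * k%:R < b - eps) &
      ((2 * eps * \sum_(k < M) truncated_mass (gpt xi eps k))%:E <=
       \int[mu]_(x in `]a, b[) (integrand x)%:E)%E].
Proof.
have e0 := eps_gt0; have step_ge0 (k : nat) : 0 <= 2 * eps * k%:R.
  by rewrite mulr_ge0 ?ler0n// mulr_ge0// ltW.
have [cd|dc] := ltP (a + eps) (b - eps); last first.
  exists (a + 2 * eps), 0%N; split; [lra|lra| |].
    by move=> k; apply/esym/negbTE; rewrite -leNgt; move: (step_ge0 k); lra.
  by rewrite big_ord0 mulr0 integral_ge0// => x _; rewrite lee_fin integrand_ge0.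
have Q_cont t : a + eps <= t <= b - eps ->
    {for t, continuous truncated_mass_primitive}.
  by move=> /andP[? ?]; apply: truncated_mass_primitive_continuous; apply/andP; split; lra.
have Q'_F t : a + eps < t < b - eps ->
    is_derive t 1 truncated_mass_primitive (truncated_mass t).
  by move=> /andP[? ?]; apply: truncated_mass_primitive_derive; apply/andP; split; lra.
have step_gt0 : 0 < 2 * eps by lra.
have [xi [M [/andP[xi_gt xi_lt] below_M shift_le]]] :=
  averaging_shift step_gt0 Q_cont Q'_F cd.
exists xi, M; split => //.
by apply: le_trans (truncated_mass_primitive_le cd); rewrite lee_fin.
Qed.

Definition selected_grid (xi : R) : set int :=
  grid a b eps xi `&` [set k | window_mass (gpt xi eps k) < 2].

(* The selected windows carry at most their masses (subadditivity of the
   integral) and every dropped point costs 2. *)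
Lemma selection_bound (xi : R) (M : nat) :
  a + eps < xi -> xi < a + eps + 2 * eps ->
  (forall k : nat, (k < M)%N = (xi + 2 * eps * k%:R < b - eps)) ->
  (\int[mu]_(t in \bigcup_(k in selected_grid xi) Ieps eps (gpt xi eps k)) `|g t|%:E +
   (2 * \sum_(k \in grid a b eps xi `\` selected_grid xi) (1 : R))%:E <=
   (\sum_(i < M) Num.min (window_mass (gpt xi eps i)) 2)%:E)%E.
Proof.
move=> xi_gt xi_lt below_M; have e0 := eps_gt0.
pose keep (k : int) := window_mass (gpt xi eps k) < 2.
have window_in (i : nat) : (i < M)%N -> a + eps <= gpt xi eps i <= b - eps.
  rewrite below_M gpt_nat => ?; have : 0 <= 2 * eps * i%:R.
    by rewrite mulr_ge0 ?ler0n// mulr_ge0// ltW.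
  by move=> ?; apply/andP; split; lra.
have dropped : grid a b eps xi `\` selected_grid xi = grid a b eps xi `&` [set k | ~~ keep k].
  apply/seteqP; split => k [Gk Kk]; split => //.
    by apply/negP => keep_k; apply: Kk.
  by move=> [_ keep_k]; move/negP: Kk.
rewrite dropped /selected_grid !(grid_select e0 xi_gt xi_lt below_M) bigcup_image.
rewrite fsbig_Posz_image.
have mabsg : measurable_fun `]a, b[ (fun t => `|g t|%:E).
  by have /integrableP[] := integrable_norm ig.
apply: le_trans.
  apply: leeD (lexx _).
  apply: (@ge0_integral_bigcup_le _ _ _ mu `]a, b[ _ _ (fun i : nat => keep i)) => //.
  - by move=> i; exact: measurable_itv.
  - by move=> i iM; have /andP[? ?] := window_in i iM; apply: subset_itvW; lra.
rewrite /= (eq_bigr (fun i : 'I_M => (window_mass (gpt xi eps i))%:E)); last first.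
  by move=> i _; have /andP[? ?] := window_in i (ltn_ord i); rewrite window_mass_integral.
rewrite sumEFin -EFinD lee_fin mulr_sumr.
rewrite [X in X + _]big_mkcond [X in _ + X]big_mkcond -big_split /=.
rewrite le_eqVlt; apply/orP; left; apply/eqP; apply: eq_bigr => i _.
rewrite /keep minElt.
by case: ifP; rewrite ?mulr0 ?mulr1 ?addr0 ?add0r.
Qed.

(* Since min(m, 2) = (2 / c0) f(m / 2), the truncated masses of a grid as in
   good_grid_shift add up to at most (c0 eps)^-1 \int_a^b integrand. *)
Lemma truncated_sum_bound (xi : R) (M : nat) :
  ((2 * eps * \sum_(k < M) truncated_mass (gpt xi eps k))%:E <=
   \int[mu]_(x in `]a, b[) (integrand x)%:E)%E ->
  ((\sum_(i < M) Num.min (window_mass (gpt xi eps i)) 2)%:E <=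
   ((c0 * eps)^-1)%:E * \int[mu]_(x in `]a, b[) (integrand x)%:E)%E.
Proof.
have e0 := eps_gt0; have c0_pos := c0_gt0.
have -> : \sum_(i < M) Num.min (window_mass (gpt xi eps i)) 2 =
    (c0 * eps)^-1 * (2 * eps * \sum_(k < M) truncated_mass (gpt xi eps k)).
  rewrite (eq_bigr _ (fun i _ => min2_fcut _ c0_gt0)) -mulr_sumr.
  by set S := \sum_(i < M) _; field; lra.
move=> shift_le; rewrite EFinM; apply: lee_wpmul2l => //.
by rewrite lee_fin invr_ge0 mulr_ge0// ltW.
Qed.

End window_mass.

Theorem mainTheorem4 (R : realType) (a b c0 eps : R) (g : R -> R) :
  a < b -> 0 < c0 -> 0 < eps ->
  (lebesgue_measure : measure _ R).-integrable `]a, b[ (EFin \o g) ->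
  exists x0 : R, exists G' : set int,
    G' `<=` grid a b eps x0 /\
    ((\int[lebesgue_measure]_(t in \bigcup_(k in G') Ieps eps (gpt x0 eps k)) `|g t|%:E)
      + (2 * \sum_(k \in grid a b eps x0 `\` G') (1 : R))%:E
     <= ((c0 * eps)^-1)%:E *
        \int[lebesgue_measure]_(x in `]a, b[)
           (fcut c0 (eps * avg (Ieps eps x `&` `]a, b[) (fun t => `|g t|)))%:E)%E.
Proof.
move=> _ c0_gt0 eps_gt0 ig.
have [xi [M [xi_gt xi_lt below_M shift_le]]] := good_grid_shift c0_gt0 eps_gt0 ig.
exists xi, (selected_grid a b eps g xi); split; first exact: subIsetl.
apply: le_trans (selection_bound eps_gt0 ig xi_gt xi_lt below_M) _.
exact (truncated_sum_bound c0_gt0 eps_gt0 shift_le).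
Qed.
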